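(* Let $n,m\ge1$, $c_1,\dots,c_n>0$, $T>0$, $\epsilon>0$, $\kappa_{ij}\ge0$, $\bar r_1,\dots,\bar r_m>0$, $R=\prod_i[0,\bar r_i]$. For each $i$ let $p_i:\mathbb{R}\to[0,1]$ be continuous and nonincreasing with $p_i(\tau)=1$ for $\tau\le0$ and $p_i(\tau)\to0$ as $\tau\to\infty$, and let $U_i:[0,\bar r_i]\to\mathbb{R}$ be continuous, nondecreasing and strictly concave such that for every $\tau\in\mathbb{R}$, $\bar r_ip_i(\tau)$ is the maximizer of $U_i(r)-\tau r$ over $r\in[0,\bar r_i]$. Let $U^*_i(\tau)=\min_{r\in[0,\bar r_i]}[\tau r-U_i(r)]$, $\varphi^i_\epsilon(\mu)=-\epsilon\log\sum_je^{-(\kappa_{ij}+\mu_j)/\epsilon}$, and for $\mu\in[0,T)^n$ $$\mathcal{D}(\mu)=\sum_iU^*_i(\varphi^i_\epsilon(\mu))+\sum_jc_j\log\Big(1-\frac{\mu_j}{T}\Big).$$ Let $\mu_j(q_j)=0$ for $q_j\le c_j$, $\mu_j(q_j)=T(1-c_j/q_j)$ for $q_j>c_j$, and $\delta_{ij}(\mu)=e^{-(\kappa_{ij}+\mu_j)/\epsilon}/\sum_ke^{-(\kappa_{ik}+\mu_k)/\epsilon}$. Let $q:[0,\infty)\to\mathbb{R}^n$ be a solution of $$\dot q_j=\sum_i\bar r_ip_i(\varphi^i_\epsilon(\mu(q)))\,\delta_{ij}(\mu(q))-\frac{q_j}{T},\quad j=1,\dots,n,$$ and let $\mathcal{T}$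 be the set of times at which all functions $t\mapsto\mu_j(q_j(t))$ and $t\mapsto c_j\log(1-\mu_j(q_j(t))/T)$ are differentiable. Then for every $t\in\mathcal{T}$, $$\frac{d}{dt}\mathcal{D}(\mu(q(t)))=\sum_{j:\,q_j(t)>c_j}Tc_j\Big[\frac{\dot q_j(t)}{q_j(t)}\Big]^2\ge0,$$ and consequently $\mathcal{D}(\mu(q(t)))$ is non-decreasing in $t$.
   Context: $\mathcal{D}(\mu)=\min_{r\in R}W(r,\mu)$ where $W(r,\mu)=\sum_i[r_i\varphi^i_\epsilon(\mu)-U_i(r_i)]+\sum_jc_j\log(1-\mu_j/T)$. The complement of $\mathcal{T}$ in $[0,\infty)$ has Lebesgue measure zero. *)

From HB Require Import structures.
From mathcomp Require Import all_boot all_order all_algebra.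
From mathcomp Require Import all_classical all_reals all_analysis.
Set Implicit Arguments. Unset Strict Implicit. Unset Printing Implicit Defensive.
Import Order.TTheory GRing.Theory Num.Theory.
Import numFieldNormedType.Exports.
Local Open Scope classical_set_scope.
Local Open Scope ring_scope.

Section Defs.
Variable R : realType.

Definition Ustar (U : R -> R) (rbar tau : R) : R :=
  inf [set tau * r - U r | r in `[0, rbar]].

Definition phi_eps (n m : nat) (eps : R) (kappa : 'I_m -> 'I_n -> R)
  (i : 'I_m) (mu : 'I_n -> R) : R :=
  - eps * ln (\sum_(j < n) expR (- (kappa i j + mu j) / eps)).

Definition delta_eps (n m : nat) (eps : R) (kappa : 'I_m -> 'I_n -> R)
  (i : 'I_m) (j : 'I_n) (mu : 'I_n -> R) : R :=
  expR (- (kappa i j + mu j) / eps) /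
  \sum_(k < n) expR (- (kappa i k + mu k) / eps).

Definition mu_of (T cj qj : R) : R :=
  if qj <= cj then 0 else T * (1 - cj / qj).

Definition mu_vec (n : nat) (T : R) (c : 'I_n -> R) (q : 'I_n -> R) : 'I_n -> R :=
  fun j => mu_of T (c j) (q j).

Definition Dual (n m : nat) (eps T : R) (c : 'I_n -> R) (kappa : 'I_m -> 'I_n -> R)
  (rbar : 'I_m -> R) (U : 'I_m -> R -> R) (mu : 'I_n -> R) : R :=
  \sum_(i < m) Ustar (U i) (rbar i) (phi_eps eps kappa i mu)
  + \sum_(j < n) c j * ln (1 - mu j / T).

End Defs.

From HB Require Import structures.
From mathcomp Require Import all_boot all_order all_algebra.
From mathcomp Require Import all_classical all_reals all_analysis.
Import Order.TTheory GRing.Theory Num.Theory.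
Import numFieldNormedType.Exports.
Local Open Scope classical_set_scope.
Local Open Scope ring_scope.
From mathcomp Require Import ring lra.

(* By the envelope theorem, D is differentiable in mu with partial derivative
   dD/dmu_j = (arrival rate at j) - c_j / (T - mu_j), and on the congested side
   q_j >= c_j this is exactly dq_j/dt.  Along the trajectory each price
   mu_j(q_j(s)) coincides, on either side of any time s > 0, with a function
   differentiable at s: T (1 - c_j / q_j) where q_j >= c_j, the constant 0 where
   q_j <= c_j, and mu_j(q_j) itself when q_j(s) = c_j and dq_j/dt(s) = 0 (it is
   then o(|t - s|)).  Every such one-sided chart of D(mu(q)) has derivative
   sum_j T c_j (dq_j/dt / q_j)^2 over its smooth coordinates, which is >= 0, and
   real induction turns nonnegative one-sided derivatives into monotonicity on
   (0, oo); right continuity at 0 extends it to [0, oo).  At a time where all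
   prices are differentiable, a price with q_j <= c_j sits at its minimum 0, so
   its derivative vanishes. *)

Section RealAnalysis.
Context {R : realType}.
Implicit Types (f g h phi : R -> R) (a b d e k x : R).

Lemma is_derive_slope_le f x d phi : phi @ x --> 0 ->
  (forall z, z != x -> `|(f z - f x) / (z - x) - d| <= phi z) ->
  is_derive x 1 f d.
Proof.
move=> phi0 slope_le; apply/is_derive1_caratheodory.
exists (fun z => if z == x then d else (f z - f x) / (z - x)); split.
- move=> z; case: eqP => [->|/eqP zx]; first by rewrite !subrr mulr0.
  by rewrite divfK ?subr_eq0.
- apply/cvgrPdist_le => e e0; rewrite eqxx.
  move/cvgrPdist_le: phi0 => /(_ e e0); apply: filterS => z.
  rewrite sub0r normrN distrC; case: eqP => [_|/eqP zx] phi_le.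
    by rewrite subrr normr0 ltW.
  exact: le_trans (slope_le z zx) (le_trans (ler_norm _) phi_le).
- by rewrite eqxx.
Qed.

Lemma is_derive_supergradient f g x : {for x, continuous g} ->
  (forall z, g z * (z - x) <= f z - f x <= g x * (z - x)) ->
  is_derive x 1 f (g x).
Proof.
move=> gx between.
apply: (@is_derive_slope_le f x (g x) (fun z => `|g x - g z|)) => [|z zx].
  rewrite -[0](normr0 R) -(subrr (g x)).
  exact: cvg_norm (cvgB (cvg_cst _) gx).
rewrite distrC; set s := (f z - f x) / (z - x).
have fE : f z - f x = s * (z - x) by rewrite divfK // subr_eq0.
have /andP[] := between z; rewrite fE.
have [zlt|zgt] := ltP z x.
- have zxn : z - x < 0 by rewrite subr_lt0.
  rewrite !(ler_nM2r zxn) => lo hi.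
  by rewrite !ler0_norm ?subr_le0 //; [lra | exact: le_trans hi lo].
- have zxp : 0 < z - x by rewrite subr_gt0 lt_neqAle eq_sym zx.
  rewrite !(ler_pM2r zxp) => lo hi.
  by rewrite !ger0_norm ?subr_ge0 //; [lra | exact: le_trans lo hi].
Qed.

Lemma is_derive0_dominated {f} g {x} k : is_derive x 1 g 0 ->
  (forall z, `|f z - f x| <= k * `|g z - g x|) -> is_derive x 1 f 0.
Proof.
move=> /is_derive1_caratheodory [h [gE hx h0]] dom.
apply: (@is_derive_slope_le f x 0 (fun z => k * `|h z|)) => [|z zx].
  rewrite -(mulr0 k) -(normr0 R) -h0; exact: cvgM (cvg_cst _) (cvg_norm hx).
rewrite subr0 normrM normfV ler_pdivrMr ?normr_gt0 ?subr_eq0 //.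
by rewrite -mulrA -normrM -gE dom.
Qed.

Lemma is_derive_sumr {n} {h : 'I_n -> R -> R} {dh : 'I_n -> R} {x} :
  (forall i, is_derive x 1 (h i) (dh i)) ->
  is_derive x 1 (fun y => \sum_(i < n) h i y) (\sum_(i < n) dh i).
Proof.
move=> /is_derive_sum; suff -> : \sum_(i < n) h i = fun y => \sum_(i < n) h i y by [].
by apply/funext => y; rewrite fct_sumE.
Qed.

Lemma is_derive_continuous {f x d} : is_derive x 1 f d -> {for x, continuous f}.
Proof. by case=> /derivable1_diffP/differentiable_continuous. Qed.

Lemma is_derive_near_lb {f x d d'} : is_derive x 1 f d -> d' < d ->
  \forall y \near x, (x <= y -> f x + d' * (y - x) <= f y) /\
                     (y <= x -> f y <= f x + d' * (y - x)).
Proof.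
move=> /is_derive1_caratheodory [g [fE gx <-]] d'g.
apply: filterS (@cvgr_gt R R (nbhs x) _ g _ gx _ d'g) => y d'gy.
have -> : f y = f x + g y * (y - x) by rewrite -fE addrC subrK.
rewrite !lerD2l; split=> [xy|yx].
- by apply: ler_wpM2r; rewrite ?subr_ge0 // ltW.
- by apply: ler_wnM2r; rewrite ?subr_le0 // ltW.
Qed.

(* [side true x y] is x <= y and [side false x y] is y <= x; [nondecreasing_at f x]
   compares f y with f x only, not nearby values with each other. *)
Definition side (b : bool) (u v : R) := if b then u <= v else v <= u.

Definition nondecreasing_at f x :=
  forall b : bool, \forall y \near x, side b x y -> side b (f x) (f y).

Lemma is_derive_gt0_nondecreasing_at {f x d} : is_derive x 1 f d -> 0 < d ->
  nondecreasing_at f x.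
Proof.
move=> fd d0 [] /=; apply: filterS (is_derive_near_lb fd d0) => y [right left];
  by rewrite /side mul0r addr0 in right left *.
Qed.

Lemma not_near_side x (b : bool) : ~ \forall y \near x, side b x y.
Proof.
move=> /nbhs_ballP [e /= e0]; rewrite /ball /side /=.
have e2 : `|e / 2| < e by rewrite gtr0_norm ?divr_gt0 // ltr_pdivrMr // ltr_pMr // ltr1n.
case: b => near_side.
- by have := near_side (x - e / 2); rewrite opprB addrC subrK => /(_ e2); lra.
- by have := near_side (x + e / 2); rewrite opprD addNKr normrN => /(_ e2); lra.
Qed.

(* Fermat's rule with differentiability at the minimizer only; the library's
   [derive1_at_min] needs it on a whole interval. *)
Lemma is_derive_min {f x d} : is_derive x 1 f d -> (forall y, f x <= f y) -> d = 0.
Proof.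
move=> fd fmin; have [dlt|dgt|//] := ltgtP d 0.
- have lt_d : - d / 2 < - d by lra.
  case: (not_near_side x false).
  apply: filterS (is_derive_near_lb (is_deriveN fd) lt_d) => y [right _].
  rewrite /side; case: leP => // xy; have := right (ltW xy); have := fmin y.
  rewrite !fctE; nra.
- have lt_d : d / 2 < d by lra.
  case: (not_near_side x true).
  apply: filterS (is_derive_near_lb fd lt_d) => y [_ left].
  rewrite /side; case: leP => // yx; have := left (ltW yx); have := fmin y.
  nra.
Qed.

Lemma nondecreasing_at_le {h a b} : a <= b ->
  (forall x, a <= x <= b -> nondecreasing_at h x) -> h a <= h b.
Proof.
move=> ab Hloc.
(* Real induction: the supremum s of the good initial segments is good, and a
   good s < b could be pushed further to the right. *)
pose S := [set x | a <= x <= b /\ forall y, a <= y <= x -> h a <= h y].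
have Sa : S a by split=> [|y /le_anti ->]; rewrite ?lexx ?ab.
have supS : has_sup S by split; [exists a | exists b => x [/andP[]]].
set s := sup S.
have a_s : a <= s := sup_upper_bound supS Sa.
have s_b : s <= b by apply: sup_le_ub; [exists a | move=> x [/andP[]]].
have Hloc_s : nondecreasing_at h s by apply: Hloc; rewrite a_s s_b.
have below_s y : a <= y < s -> h a <= h y.
  move=> /andP[ay ys]; have /sup_adherent : 0 < s - y by rewrite subr_gt0.
  move=> /(_ _ supS) [z [_ Hz]]; rewrite opprB addrC subrK => yz.
  by apply: Hz; rewrite ay ltW.
have Has : h a <= h s.
  have [a_lt_s|s_le_a] := ltP a s; last by rewrite (@le_anti _ _ s a) ?s_le_a.
  have /filter_ex [y [ay ys hys]] :
      \forall y \near s^'-, [/\ a < y, y < s & h y <= h s].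
    near=> y; split; [by near: y; exact: nbhs_left_gt
                     | by near: y; exact: nbhs_left_lt |].
    near: y; rewrite near_withinE; apply: filterS (Hloc_s false) => y + /ltW.
    exact.
  by apply: le_trans hys; apply: below_s; rewrite ys ltW.
have Ss : S s.
  split=> [|y /andP[ay ys]]; first by rewrite a_s s_b.
  by case: ltgtP ys => // [y_lt_s|->] _; [apply: below_s; rewrite ay y_lt_s|].
have [s_lt_b|b_le_s] := ltP s b; last first.
  by case: Ss => _; apply; rewrite ab b_le_s.
have /nbhs_ballP [e /= e0 near_s] := Hloc_s true.
pose y := Num.min b (s + e / 2).
have s_lt_y : s < y by rewrite lt_min s_lt_b ltrDl divr_gt0.
suff Sy : S y by have := sup_upper_bound supS Sy; rewrite leNgt s_lt_y.
split=> [|z /andP[az zy]]; first by rewrite ge_min lexx (le_trans a_s (ltW s_lt_y)).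
have [z_le_s|s_lt_z] := leP z s; first by case: Ss => _; apply; rewrite az.
apply: le_trans Has _; apply: (near_s z) (ltW s_lt_z).
rewrite /ball /= ltr0_norm ?subr_lt0 // opprB.
have : z <= s + e / 2 by apply: le_trans zy _; rewrite ge_min lexx orbT.
lra.
Unshelve. all: by end_near. Qed.

Lemma nondecreasing_at_shift_le {h a b} : a <= b ->
  (forall e, 0 < e -> forall x, a <= x <= b -> nondecreasing_at (fun y => h y + e * y) x) ->
  h a <= h b.
Proof.
move=> ab Hloc; apply/ler_addgt0Pr => e e0.
have ba1 : 0 < b - a + 1 by rewrite ltr_wpDl ?subr_ge0.
have e'0 : 0 < e / (b - a + 1) by rewrite divr_gt0.
have := nondecreasing_at_le ab (Hloc _ e'0).
have : e / (b - a + 1) * (b - a) <= e.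
  by rewrite mulrAC ler_pdivrMr // ler_pM2l // lerDl ler01.
lra.
Qed.

End RealAnalysis.

Section ConcaveConjugate.
Context {R : realType} {U r : R -> R} {rb : R}.
Implicit Types tau x : R.
Hypotheses (r_in : forall tau, 0 <= r tau <= rb)
  (r_max : forall tau x, 0 <= x <= rb -> U x - tau * x <= U (r tau) - tau * r tau).

Lemma Ustar_eq tau : Ustar U rb tau = tau * r tau - U (r tau).
Proof.
set S := [set tau * x - U x | x in `[0, rb]].
have lbS : lbound S (tau * r tau - U (r tau)).
  by move=> _ [x /= x_in <-]; move: x_in; rewrite in_itv => /(r_max tau); lra.
have Sr : S (tau * r tau - U (r tau)) by exists (r tau); rewrite /= ?in_itv ?r_in.
apply/le_anti; rewrite (lb_le_inf (ex_intro _ _ Sr) lbS) andbT.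
by apply: ge_inf; [exists (tau * r tau - U (r tau)) | ].
Qed.

Lemma Ustar_le tau x : 0 <= x <= rb -> Ustar U rb tau <= tau * x - U x.
Proof. by rewrite Ustar_eq => /(r_max tau); lra. Qed.

Lemma is_derive_Ustar tau : {for tau, continuous r} ->
  is_derive tau 1 (Ustar U rb) (r tau).
Proof.
move=> r_cont; apply: is_derive_supergradient => // z.
have := Ustar_le z _ (r_in tau); have := Ustar_le tau _ (r_in z).
by rewrite !Ustar_eq => ? ?; apply/andP; split; lra.
Qed.
End ConcaveConjugate.

Section Price.
Context {R : realType} {T c : R}.
Hypotheses (T_gt0 : 0 < T) (c_gt0 : 0 < c).
Implicit Types v : R.

Lemma mu_of_le v : v <= c -> mu_of T c v = 0.
Proof. by rewrite /mu_of => ->. Qed.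

Lemma mu_of_ge v : c <= v -> mu_of T c v = T * (1 - c / v).
Proof.
rewrite /mu_of; case: ifP => // v_le_c c_le_v.
by rewrite (@le_anti _ _ v c) ?v_le_c // divff ?gt_eqF // subrr mulr0.
Qed.

Lemma mu_of_max v : mu_of T c v = T * (1 - c / Num.max v c).
Proof.
case: (leP v c) => [v_le_c|c_lt_v]; last by rewrite mu_of_ge ?ltW.
by rewrite mu_of_le // divff ?gt_eqF // subrr mulr0.
Qed.

Lemma mu_of_ge0 v : 0 <= mu_of T c v.
Proof.
have max_gt0 : 0 < Num.max v c by rewrite lt_max c_gt0 orbT.
rewrite mu_of_max; apply: mulr_ge0; first exact: ltW.
by rewrite subr_ge0 ler_pdivrMr // mul1r le_max lexx orbT.
Qed.

Lemma mu_of_lt v : mu_of T c v < T.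
Proof.
have max_gt0 : 0 < Num.max v c by rewrite lt_max c_gt0 orbT.
by rewrite mu_of_max gtr_pMr // ltrBlDr ltrDl divr_gt0.
Qed.

Lemma mu_of_le_dist v : mu_of T c v <= T / c * `|v - c|.
Proof.
case: (leP v c) => [v_le_c|c_lt_v].
  by rewrite mu_of_le // mulr_ge0 // divr_ge0 // ltW.
have v_gt0 : 0 < v by apply: lt_trans c_lt_v.
rewrite mu_of_ge ?(ltW c_lt_v) // gtr0_norm ?subr_gt0 // -subr_ge0.
have -> : T / c * (v - c) - T * (1 - c / v) = T * (v - c) ^+ 2 / (c * v).
  by field; rewrite !gt_eqF.
by rewrite divr_ge0 // mulr_ge0 ?sqr_ge0 // ltW.
Qed.

Lemma continuous_mu_of : continuous (mu_of T c).
Proof.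
move=> v; rewrite (_ : mu_of T c = fun v => T * (1 - c / Num.max v c)).
  have max_gt0 : 0 < Num.max v c by rewrite lt_max c_gt0 orbT.
  apply: cvgM (cvg_cst _) (cvgB (cvg_cst _) (cvgM (cvg_cst _) (cvgV (lt0r_neq0 max_gt0) _))).
  exact: continuous_max cvg_id (cvg_cst _).
by apply/funext => w; rewrite mu_of_max.
Qed.

Lemma div_sub_mu_of v : c <= v -> c / (T - mu_of T c v) = v / T.
Proof.
move=> c_le_v; have v_gt0 : 0 < v by apply: lt_le_trans c_le_v.
rewrite mu_of_ge //; field.
have -> : T * v - T * (v - c) = T * c by ring.
by rewrite !gt_eqF ?mulr_gt0.
Qed.

End Price.

Section DualFunction.
Context {R : realType} {n m : nat} {eps T : R} {c : 'I_n -> R} {kappa : 'I_m -> 'I_n -> R}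
  {rbar : 'I_m -> R} {p U : 'I_m -> R -> R}.
Hypotheses (n_gt0 : (0 < n)%N) (eps_gt0 : 0 < eps) (T_gt0 : 0 < T)
  (rbar_ge0 : forall i, 0 <= rbar i) (p_range : forall i tau, 0 <= p i tau <= 1)
  (p_cont : forall i, continuous (p i))
  (U_max : forall i tau x, 0 <= x <= rbar i ->
      U i x - tau * x <= U i (rbar i * p i tau) - tau * (rbar i * p i tau)).

Lemma sum_expR_gt0 (a : 'I_n -> R) : 0 < \sum_(j < n) expR (a j).
Proof.
rewrite (bigD1 (Ordinal n_gt0)) //= ltr_wpDr ?expR_gt0 //.
by rewrite sumr_ge0 // => j _; rewrite expR_ge0.
Qed.

Lemma is_derive_phi_eps (i : 'I_m) {f : 'I_n -> R -> R} {df : 'I_n -> R} {s : R} :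
  (forall j, is_derive s 1 (f j) (df j)) ->
  is_derive s 1 (fun y => phi_eps eps kappa i (fun j => f j y))
    (\sum_(j < n) delta_eps eps kappa i j (fun j => f j s) * df j).
Proof.
move=> f_df.
have de j : is_derive s 1 (fun y => expR (- (kappa i j + f j y) / eps))
    (expR (- (kappa i j + f j s) / eps) * (- df j / eps)).
  apply: is_derive_eq (is_derive1_comp (is_derive_expR _)
    (is_deriveM (is_deriveN (is_deriveD (is_derive_cst (kappa i j) s 1) (f_df j)))
       (is_derive_cst eps^-1 s 1))) _.
  by rewrite scaler0 !add0r; congr (_ * _); exact: mulrC.
have E_gt0 := sum_expR_gt0 (fun j => - (kappa i j + f j s) / eps).
apply: (is_derive_eq (is_deriveZ (- eps)
  (is_derive1_comp (is_derive1_ln E_gt0) (is_derive_sumr de)))).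
have eps0 := lt0r_neq0 eps_gt0; have E0 := lt0r_neq0 E_gt0.
rewrite mulr_sumr scaler_sumr; apply: eq_bigr => j _; rewrite /delta_eps.
by rewrite /GRing.scale /=; field; rewrite E0 eps0.
Qed.

Definition arrival (mu : 'I_n -> R) (j : 'I_n) :=
  \sum_(i < m) rbar i * p i (phi_eps eps kappa i mu) * delta_eps eps kappa i j mu.

Definition dual_grad (mu : 'I_n -> R) (j : 'I_n) := arrival mu j - c j / (T - mu j).

Lemma rbar_p_in i tau : 0 <= rbar i * p i tau <= rbar i.
Proof.
have /andP[p0 p1] := p_range i tau.
by rewrite mulr_ge0 //= ler_piMr.
Qed.

Lemma is_derive_Dual {f : 'I_n -> R -> R} {df : 'I_n -> R} {s : R} :
  (forall j, is_derive s 1 (f j) (df j)) -> (forall j, f j s < T) ->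
  is_derive s 1 (fun y => Dual eps T c kappa rbar U (fun j => f j y))
    (\sum_(j < n) df j * dual_grad (fun j => f j s) j).
Proof.
move=> f_df f_lt_T; set mu := fun j => f j s.
have dU i : is_derive s 1
    (fun y => Ustar (U i) (rbar i) (phi_eps eps kappa i (fun j => f j y)))
    (rbar i * p i (phi_eps eps kappa i mu) *
      \sum_(j < n) delta_eps eps kappa i j mu * df j).
  have r_cont : {for phi_eps eps kappa i mu, continuous (fun tau => rbar i * p i tau)}.
    exact: cvgM (cvg_cst _) (p_cont i _).
  exact: (is_derive1_comp (g := fun y => phi_eps eps kappa i (fun j => f j y))
    (is_derive_Ustar (rbar_p_in i) (U_max i) _ r_cont) (is_derive_phi_eps i f_df)).
have dL j : is_derive s 1 (fun y => c j * ln (1 - f j y / T))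
    (- c j * df j / (T - mu j)).
  have pos : 0 < 1 - mu j / T by rewrite subr_gt0 ltr_pdivrMr // mul1r; exact: f_lt_T.
  apply: (is_derive_eq (is_deriveZ (c j) (is_derive1_comp (g := fun y => 1 - f j y / T)
    (is_derive1_ln pos)
    (is_deriveB (is_derive_cst (1 : R) s 1) (is_deriveM (f_df j) (is_derive_cst T^-1 s 1)))))).
  rewrite /GRing.scale /=.
  have T0 := lt0r_neq0 T_gt0; have TmuT : T - mu j != 0 by rewrite subr_eq0 gt_eqF ?f_lt_T.
  by field; rewrite TmuT T0.
apply: (is_derive_eq (is_deriveD (is_derive_sumr dU) (is_derive_sumr dL))).
rewrite /dual_grad /arrival; under [RHS]eq_bigr do rewrite mulrBr.
rewrite sumrB -sumrN; congr (_ + _); last by apply: eq_bigr => j _; ring.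
under [RHS]eq_bigr do rewrite mulr_sumr.
rewrite exchange_big /=; apply: eq_bigr => i _.
by rewrite mulr_sumr; apply: eq_bigr => j _; ring.
Qed.

Lemma cvg_Dual {X : Type} (F : set_system X) {FF : Filter F}
    (g : 'I_n -> X -> R) (l : 'I_n -> R) :
  (forall j, g j @ F --> l j) -> (forall j, l j < T) ->
  Dual eps T c kappa rbar U (fun j => g j x) @[x --> F] --> Dual eps T c kappa rbar U l.
Proof.
move=> gl l_lt_T; apply: cvgD; apply: cvg_big => [|k _]; try exact: add_continuous.
- have r_cont : continuous (fun tau => rbar k * p k tau).
    by move=> tau; exact: cvgM (cvg_cst _) (p_cont k _).
  apply: (continuous_cvg _ (is_derive_continuous
    (is_derive_Ustar (rbar_p_in k) (U_max k) _ (r_cont _)))).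
  apply: cvgM (cvg_cst _) _.
  apply: (continuous_cvg _ (continuous_ln (sum_expR_gt0 _))).
  apply: cvg_big => [|j _]; first exact: add_continuous.
  apply: (continuous_cvg _ (@continuous_expR R _)).
  exact: cvgM (cvgN (cvgD (cvg_cst _) (gl j))) (cvg_cst _).
- apply: cvgM (cvg_cst _) _.
  have pos : 0 < 1 - l k / T by rewrite subr_gt0 ltr_pdivrMr // mul1r.
  apply: (continuous_cvg _ (continuous_ln pos)).
  exact: cvgB (cvg_cst _) (cvgM (gl k) (cvg_cst _)).
Qed.

Section Trajectory.
Context {q : R -> 'I_n -> R}.
Hypothesis c_gt0 : forall j, 0 < c j.
Implicit Types (t x y : R) (j : 'I_n) (b : bool).

Let mu_t (j : 'I_n) (t : R) := mu_of T (c j) (q t j).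
Let qdot (t : R) (j : 'I_n) := arrival (mu_vec T c (q t)) j - q t j / T.
Let Dq (t : R) := Dual eps T c kappa rbar U (mu_vec T c (q t)).

Hypotheses (q_ode : forall t, 0 < t -> forall j, is_derive t 1 (fun s => q s j) (qdot t j))
  (q_cont0 : forall j, (fun s => q s j) @ 0^'+ --> q 0 j).

Lemma dual_grad_qdot t j : c j <= q t j -> dual_grad (mu_vec T c (q t)) j = qdot t j.
Proof. by move=> cq; rewrite /dual_grad /mu_vec (div_sub_mu_of T_gt0 (c_gt0 j)). Qed.

Lemma is_derive_mu_smooth x j : 0 < x -> 0 < q x j ->
  is_derive x 1 (fun s => T * (1 - c j / q s j)) (T * c j * qdot x j / q x j ^+ 2).
Proof.
move=> x_gt0 qx_gt0; have qx0 := lt0r_neq0 qx_gt0.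
apply: (is_derive_eq (is_deriveZ T (is_deriveB (is_derive_cst (1 : R) x 1)
  (is_deriveZ (c j) (is_deriveV qx0 (q_ode x x_gt0 j)))))).
by rewrite /GRing.scale /=; field.
Qed.

Lemma is_derive_mu_t t j : 0 < t -> derivable (mu_t j) t 1 ->
  is_derive t 1 (mu_t j) (if c j < q t j then T * c j * qdot t j / q t j ^+ 2 else 0).
Proof.
move=> t_gt0 mu_t_derivable; case: ifPn => [cq|].
  apply: (near_eq_is_derive _ (is_derive_mu_smooth t j t_gt0 (lt_trans (c_gt0 j) cq))).
  have q_cont := is_derive_continuous (q_ode t t_gt0 j).
  apply: filterS (@cvgr_gt R R (nbhs t) _ (fun s => q s j) _ q_cont _ cq) => y /ltW.
  by move=> cq_y; rewrite /mu_t (mu_of_ge (c_gt0 j)).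
rewrite -leNgt => qc; have dmu := derivableP mu_t_derivable.
rewrite -(is_derive_min dmu) // => y.
by rewrite /mu_t mu_of_le // mu_of_ge0.
Qed.

Lemma is_derive_Dq t : 0 < t -> (forall j, derivable (mu_t j) t 1) ->
  is_derive t 1 Dq (\sum_(j < n | c j < q t j) T * c j * (qdot t j / q t j) ^+ 2).
Proof.
move=> t_gt0 mu_derivable.
apply: (is_derive_eq (is_derive_Dual (fun j => is_derive_mu_t t j t_gt0 (mu_derivable j))
  (fun j => mu_of_lt T_gt0 (c_gt0 j) _))).
rewrite [RHS]big_mkcond; apply: eq_bigr => j _ /=; case: ifPn => [cq|]; last by rewrite mul0r.
have qt0 : q t j != 0 by rewrite gt_eqF // (lt_trans (c_gt0 j)).
by rewrite (dual_grad_qdot t j (ltW cq)); field.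
Qed.

(* A one-sided chart of the price mu_t j at x; the last clause makes its
   contribution to the derivative of the charted dual function nonnegative. *)
Definition mu_chart x b j (f : R -> R) (df : R) :=
  [/\ is_derive x 1 f df, f x = mu_t j x,
      \forall y \near x, side b x y -> f y = mu_t j y &
      0 <= df * dual_grad (mu_vec T c (q x)) j].

Lemma chart_smooth x b j : 0 < x -> c j <= q x j ->
  (\forall y \near x, side b x y -> c j <= q y j) -> exists f df, mu_chart x b j f df.
Proof.
move=> x_gt0 cq near_cq; have qx_gt0 : 0 < q x j := lt_le_trans (c_gt0 j) cq.
exists (fun s => T * (1 - c j / q s j)), (T * c j * qdot x j / q x j ^+ 2); split.
- exact: is_derive_mu_smooth.
- by rewrite /mu_t (mu_of_ge (c_gt0 j)).
- by apply: filterS near_cq => y side_cq /side_cq cq_y; rewrite /mu_t (mu_of_ge (c_gt0 j)).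
have -> : T * c j * qdot x j / q x j ^+ 2 * dual_grad (mu_vec T c (q x)) j =
    T * c j * (qdot x j / q x j) ^+ 2.
  by rewrite dual_grad_qdot //; field; rewrite gt_eqF.
by rewrite mulr_ge0 ?sqr_ge0 // mulr_ge0 // ltW.
Qed.

Lemma chart_zero x b j : q x j <= c j ->
  (\forall y \near x, side b x y -> q y j <= c j) -> exists f df, mu_chart x b j f df.
Proof.
move=> qc near_qc; exists (fun => 0), 0; split.
- exact: is_derive_cst.
- by rewrite /mu_t mu_of_le.
- by apply: filterS near_qc => y side_qc /side_qc qc_y; rewrite /mu_t mu_of_le.
- by rewrite mul0r.
Qed.

Lemma chart_critical x b j : 0 < x -> q x j = c j -> qdot x j = 0 ->
  exists f df, mu_chart x b j f df.
Proof.
(* Since mu_of is Lipschitz at c, the price inherits the zero derivative of q. *)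
move=> x_gt0 qc qdot0; exists (mu_t j), 0; split => //; last by rewrite mul0r.
- apply: (is_derive0_dominated (fun s => q s j) (T / c j)).
    by rewrite -qdot0; exact: q_ode.
  move=> z; rewrite /mu_t qc (mu_of_le _ (lexx (c j))) subr0 ger0_norm ?mu_of_ge0 //.
  exact: mu_of_le_dist.
- exact: filterE.
Qed.

Lemma exists_mu_chart x b j : 0 < x -> exists f df, mu_chart x b j f df.
Proof.
move=> x_gt0; have q_cont := is_derive_continuous (q_ode x x_gt0 j).
have [cq|qc|qc] := ltgtP (c j) (q x j).
- apply: chart_smooth => //; first exact: ltW.
  by apply: filterS (@cvgr_gt R R (nbhs x) _ (fun s => q s j) _ q_cont _ cq) => y /ltW.
- apply: chart_zero; first exact: ltW.
  by apply: filterS (@cvgr_lt R R (nbhs x) _ (fun s => q s j) _ q_cont _ qc) => y /ltW.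
have [qdot_lt0|qdot_gt0|qdot0] := ltgtP (qdot x j) 0; last exact: chart_critical.
- have /(_ b) := is_derive_gt0_nondecreasing_at (is_deriveN (q_ode x x_gt0 j))
    (ltac:(by rewrite oppr_gt0) : 0 < - qdot x j).
  case: b => near_q; [apply: chart_zero | apply: chart_smooth]; rewrite ?qc //;
    by apply: filterS near_q => y /[apply] /=; rewrite lerN2.
- have /(_ b) := is_derive_gt0_nondecreasing_at (q_ode x x_gt0 j) qdot_gt0.
  case: b => near_q; [apply: chart_smooth | apply: chart_zero]; rewrite ?qc //;
    by apply: filterS near_q => y /[apply].
Qed.

Lemma nondecreasing_at_Dq x e : 0 < x -> 0 < e ->
  nondecreasing_at (fun y => Dq y + e * y) x.
Proof.
(* Adding e * y makes the nonnegative derivative of the charted dual function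
   positive, hence gives pointwise monotonicity on side b. *)
move=> x_gt0 e_gt0 b.
have /boolp.choice [fd chart] : forall j, exists fd : (R -> R) * R, mu_chart x b j fd.1 fd.2.
  by move=> j; have [f [df ?]] := exists_mu_chart x b j x_gt0; exists (f, df).
have chart_x : (fun j => (fd j).1 x) = mu_vec T c (q x).
  by apply/funext => j; case: (chart j).
have Ds_deriv : is_derive x 1 (fun y => Dual eps T c kappa rbar U (fun j => (fd j).1 y) + e * y)
    (\sum_(j < n) (fd j).2 * dual_grad (fun j => (fd j).1 x) j + e).
  have fd_lt_T j : (fd j).1 x < T.
    by case: (chart j) => _ -> _ _; exact: (mu_of_lt T_gt0 (c_gt0 j)).
  have fd_deriv j : is_derive x 1 (fd j).1 (fd j).2 by case: (chart j).
  apply: (is_derive_eq (is_deriveD (is_derive_Dual fd_deriv fd_lt_T)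
    (is_deriveZ e (is_derive_id x 1)))).
  by rewrite /GRing.scale /= mulr1.
have d_gt0 : 0 < \sum_(j < n) (fd j).2 * dual_grad (fun j => (fd j).1 x) j + e.
  rewrite chart_x ltr_wpDl // sumr_ge0 // => j _; by case: (chart j).
have near_Dq : \forall y \near x, side b x y ->
    Dq y = Dual eps T c kappa rbar U (fun j => (fd j).1 y).
  have /filter_forall : forall j, \forall y \near x, side b x y -> (fd j).1 y = mu_t j y.
    by move=> j; case: (chart j).
  apply: filterS => y fd_mu side_y; congr Dual; apply/funext => j.
  by rewrite fd_mu.
have Dq_x : Dq x = Dual eps T c kappa rbar U (fun j => (fd j).1 x) by rewrite /Dq -chart_x.
apply: filterS2 near_Dq (is_derive_gt0_nondecreasing_at Ds_deriv d_gt0 b).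
by move=> y Dq_y Ds_y side_y; rewrite Dq_x Dq_y //; apply: Ds_y.
Qed.

Lemma Dq_le s t : 0 < s -> s <= t -> Dq s <= Dq t.
Proof.
move=> s_gt0 st; apply: (nondecreasing_at_shift_le st) => e e_gt0 x /andP[sx _].
exact: nondecreasing_at_Dq (lt_le_trans s_gt0 sx) e_gt0.
Qed.


Lemma Dq0_le t : 0 < t -> Dq 0 <= Dq t.
Proof.
move=> t_gt0.
have cvgDq : Dq y @[y --> 0^'+] --> Dq 0.
  apply: cvg_Dual => [j|j]; last exact: (mu_of_lt T_gt0 (c_gt0 j)).
  exact: continuous_cvg (continuous_mu_of (c_gt0 j) _) (q_cont0 j).
rewrite -(cvg_lim _ cvgDq) //; apply: limr_le; first by apply/cvg_ex; exists (Dq 0).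
by apply: filterS2 (nbhs_right_gt 0) (nbhs_right_le t_gt0) => y; exact: Dq_le.
Qed.

Lemma Dq_nondecreasing s t : 0 <= s -> s <= t -> Dq s <= Dq t.
Proof.
move=> s_ge0 st; have [s_gt0|s_le0] := ltP 0 s; first exact: Dq_le.
have -> : s = 0 by apply/le_anti; rewrite s_le0 s_ge0.
have [t_gt0|t_le0] := ltP 0 t; first exact: Dq0_le.
by have -> : t = 0 by apply/le_anti; rewrite t_le0 (le_trans s_ge0 st).
Qed.

Lemma derive1_q t j : 0 < t -> derive1 (fun s => q s j) t = qdot t j.
Proof. by move=> t_gt0; rewrite derive1E; case: (q_ode t t_gt0 j) => _ ->. Qed.

End Trajectory.

End DualFunction.

Theorem proposition6 (R : realType) (n m : nat) (hn : (0 < n)%N) (hm : (0 < m)%N)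
  (c : 'I_n -> R) (T eps : R) (kappa : 'I_m -> 'I_n -> R) (rbar : 'I_m -> R)
  (p : 'I_m -> R -> R) (U : 'I_m -> R -> R) (q : R -> 'I_n -> R)
  (hc : forall j, 0 < c j) (hT : 0 < T) (heps : 0 < eps)
  (hkappa : forall i j, 0 <= kappa i j) (hrbar : forall i, 0 < rbar i)
  (* p_i : R -> [0,1] continuous, nonincreasing, = 1 on (-oo,0], -> 0 at +oo *)
  (hp_cont : forall i, continuous (p i))
  (hp_range : forall i (x : R), 0 <= p i x <= 1)
  (hp_noninc : forall i (x y : R), x <= y -> p i y <= p i x)
  (hp_one : forall i (x : R), x <= 0 -> p i x = 1)
  (hp_lim : forall i, p i x @[x --> +oo] --> 0)
  (* U_i : [0, rbar_i] -> R continuous, nondecreasing, strictly concave *)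
  (hU_cont : forall i, {within `[0, rbar i], continuous (U i)})
  (hU_nondec : forall i (x y : R), 0 <= x -> x <= y -> y <= rbar i -> U i x <= U i y)
  (hU_sconc : forall i (x y l : R), 0 <= x <= rbar i -> 0 <= y <= rbar i -> x != y ->
      0 < l < 1 -> l * U i x + (1 - l) * U i y < U i (l * x + (1 - l) * y))
  (* rbar_i p_i(tau) maximizes U_i(r) - tau r over [0, rbar_i] *)
  (hU_max : forall i (tau r : R), 0 <= r <= rbar i ->
      U i r - tau * r <= U i (rbar i * p i tau) - tau * (rbar i * p i tau))
  (* q is a solution of the ODE on [0, +oo) *)
  (hq_cont0 : forall j, (fun s => q s j) @ at_right 0 --> q 0 j)
  (hq_ode : forall t : R, 0 < t -> forall j : 'I_n,
      is_derive t 1 (fun s => q s j)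
        (\sum_(i < m) rbar i * p i (phi_eps eps kappa i (mu_vec T c (q t)))
                        * delta_eps eps kappa i j (mu_vec T c (q t))
         - q t j / T)) :
  let curT := [set t : R | 0 < t /\ forall j : 'I_n,
      derivable (fun s => mu_of T (c j) (q s j)) t 1 /\
      derivable (fun s => c j * ln (1 - mu_of T (c j) (q s j) / T)) t 1] in
  let Dq := fun s => Dual eps T c kappa rbar U (mu_vec T c (q s)) in
  (forall t : R, curT t ->
     is_derive t 1 Dq
       (\sum_(j < n | c j < q t j)
           T * c j * (derive1 (fun s => q s j) t / q t j) ^+ 2) /\
     0 <= \sum_(j < n | c j < q t j)
           T * c j * (derive1 (fun s => q s j) t / q t j) ^+ 2) /\
  (forall s t : R, 0 <= s -> s <= t -> Dq s <= Dq t).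
Proof.
move=> curT Dq; have rbar_ge0 i : 0 <= rbar i := ltW (hrbar i).
split; last exact: (Dq_nondecreasing hn heps hT rbar_ge0 hp_range hp_cont hU_max hc hq_ode hq_cont0).
move=> t [t_gt0 mu_derivable].
under eq_bigr => j _ do rewrite (derive1_q hq_ode t j t_gt0).
split; first exact: (is_derive_Dq hn heps hT rbar_ge0 hp_range hp_cont hU_max hc hq_ode
  t t_gt0 (fun j => proj1 (mu_derivable j))).
by apply: sumr_ge0 => j _; rewrite mulr_ge0 ?sqr_ge0 // mulr_ge0 // ltW.
Qed.
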